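(* Let $\rhd$ be a value system and let $\mathcal{I}$ be an assignment that is admissible for $\rhd$. Then $\mathcal{I}$ is an interpretation and $s\rhd\hat{\mathcal{I}}s$ for all terms $s$. Furthermore, if $\rhd$ is functional, then $\mathcal{I}$ is surjective.
   Context: Types: a countable set of base types ($\beta$); every base type is a type and $\sigma\tau$ is a type (functions from $\sigma$ to $\tau$) for types $\sigma,\tau$. Countably many names, each with a unique type, infinitely many of each type. Terms: names; $st:\mu$ for $s:\tau\mu,t:\tau$; $\lambda x.t:\sigma\tau$ for a name $x:\sigma$, $t:\tau$. $\mathrm{Wff}_\sigma$: terms of type $\sigma$. A frame $\mathcal{D}$ maps types to nonempty sets with $\mathcal{D}(\sigma\tau)\subseteq(\mathcal{D}\sigma\to\mathcal{D}\tau)$. An assignment $\mathcal{I}$ into $\mathcal{D}$ extends $\mathcal{D}$ and maps each name $x:\sigma$ into $\mathcal{D}\sigma$; $\mathcal{I}^x_a$ is the update at $x$. Partial evaluation: $\hat{\mathcal{I}}x=\mathcal{I}x$; $\hat{\mathcal{I}}(st)=(\hat{\mathcal{I}}s)(\hat{\mathcal{I}}t)$ when both are defined; $\hat{\mathcal{I}}(\lambda x.s)=f$ if $\lambda x.s:\sigma\tau$, $f\in\mathcal{D}(\sigma\tau)$ and $\widehat{\mathcal{I}^x_a}s=fa$ for all $a\in\mathcal{D}\sigma$ (undefined otherwise). An interpretation is an assignment whose evaluation is total; it is surjective if for every type $\sigma$ and every $a\in\mathcal{I}\sigma$ there is $s:\sigma$ with $\hat{\mathcal{I}}s=a$. Normalization: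 a fixed type-preserving total $[\cdot]$ on terms with (N1) $[[s]]=[s]$; (N2) $[[s]t]=[st]$; (N3) $[xs_1\dots s_n]=x[s_1]\dots[s_n]$ for a name $x$, $n\ge0$, $xs_1\dots s_n$ of base type; (N4) $\hat{\mathcal{I}}[s]=\hat{\mathcal{I}}s$ for every interpretation. A substitution is a type-preserving partial function $\theta$ from names to terms ($\theta^x_s$ the update); every substitution extends to a type-preserving total $\hat\theta$ with (S1) $\hat\theta x=\theta x$ if $x\in\mathrm{Dom}\theta$, else $x$; (S2) $\hat\theta(st)=(\hat\theta s)(\hat\theta t)$; (S3) $[(\hat\theta(\lambda x.s))t]=[\widehat{\theta^x_t}s]$; (S4) $[\hat\emptyset s]=[s]$ where $\emptyset$ is the empty substitution. A value system is a function $\rhd$ mapping each base type $\beta$ to a binary relation $\rhd_\beta$ with $\mathrm{Dom}(\rhd_\beta)\subseteq\mathrm{Wff}_\beta$ such that $s\rhd_\beta a$ iff $[s]\rhd_\beta a$; extended by $\mathcal{D}\sigma:=\mathrm{Ran}(\rhd_\sigma)$ and $\rhd_{\sigma\tau}:=\{(s,f)\in\mathrm{Wff}_{\sigma\tau}\times(\mathcal{D}\sigma\to\mathcal{D}\tau):\forall(t,a)\in\rhd_\sigma,\ (st,fa)\in\rhd_\tau\}$. It is functional if each $\rhd_\beta$ ($\beta$ a base type) is a functional relation. An assignment $\mathcal{I}$ is admissible for $\rhd$ if $\mathcal{I}\sigma=\mathcal{D}\sigma$ for all types $\sigma$ and $x\rhd\mathcal{I}x$ for all names $x$. *)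

From mathcomp Require Import ssreflect ssrfun ssrbool eqtype choice.
From Stdlib Require Import PeanoNat.

Set Implicit Arguments.
Unset Strict Implicit.
Unset Printing Implicit Defensive.

Section Lambda.
Variable B : countType.

(* Types: base types and function types  Arr s t  (written  s t  in the paper). *)
Inductive ty : Type := Base (b : B) | Arr (s t : ty).

Definition ty_eq_dec (s t : ty) : {s = t} + {s <> t}.
Proof. decide equality. by case: (b =P b0); [left|right]. Defined.

(* Names: each name has a unique type, infinitely (countably) many of each type. *)
Definition name : Type := (ty * nat)%type.
Definition tyof (x : name) : ty := fst x.

Definition name_eq_dec (x y : name) : {x = y} + {x <> y}.
Proof. decide equality; [exact: Nat.eq_dec | exact: ty_eq_dec]. Defined.

(* Well-typed terms, intrinsically typed:  tm s  is  Wff_s. *)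
Inductive tm : ty -> Type :=
| Var (x : name) : tm (tyof x)
| App (s t : ty) : tm (Arr s t) -> tm s -> tm t
| Lam (x : name) (t : ty) : tm t -> tm (Arr (tyof x) t).

(* Frames: D(s t) is a set of functions D s -> D t.  We represent it as an
   applicative structure (carrier per type plus application); [is_frame] asks
   for nonempty carriers and extensionality of application, i.e. elements of
   D(s t) are (identified with) functions D s -> D t. *)
Record frame := Frame {
  car : ty -> Type;
  app : forall s t, car (Arr s t) -> car s -> car t }.
Arguments app F {s t} : rename.

Definition is_frame (F : frame) : Prop :=
  (forall s, inhabited (car F s)) /\
  (forall s t (f g : car F (Arr s t)), (forall a, app F f a = app F g a) -> f = g).

Definition asg (F : frame) := forall x : name, car F (tyof x).

Definition upd (F : frame) (I : asg F) (x : name) (a : car F (tyof x)) : asg F :=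
  fun y => match name_eq_dec x y with
           | left e => eq_rect x (fun z => car F (tyof z)) a y e
           | right _ => I y
           end.

(* Partial evaluation as a relation:  evalR s I v  means  "Î s is defined and = v". *)
Fixpoint evalR (F : frame) (r : ty) (u : tm r) : asg F -> car F r -> Prop :=
  match u in tm r return asg F -> car F r -> Prop with
  | Var x => fun I v => v = I x
  | App s0 t0 s t => fun I v =>
      exists (f : car F (Arr s0 t0)) (a : car F s0),
        evalR s I f /\ evalR t I a /\ v = app F f a
  | Lam x t0 s => fun I f => forall a : car F (tyof x), evalR s (@upd F I x a) (app F f a)
  end.

Definition interpretation (F : frame) (I : asg F) : Prop :=
  is_frame F /\ forall r (s : tm r), exists v, evalR s I v.

Definition surjective (F : frame) (I : asg F) : Prop :=
  forall r (a : car F r), exists s : tm r, evalR s I a.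

Definition normfun := forall r, tm r -> tm r.

Fixpoint is_nameapp (r : ty) (s : tm r) : Prop :=
  match s with
  | Var _ => True
  | App _ _ s1 _ => is_nameapp s1
  | Lam _ _ _ => False
  end.

Fixpoint nargs (nf : normfun) (r : ty) (s : tm r) : tm r :=
  match s in tm r return tm r with
  | Var x => Var x
  | App _ _ s1 t => App (nargs nf s1) (nf _ t)
  | Lam x _ s1 => Lam x s1
  end.

Definition N1 (nf : normfun) := forall r (s : tm r), nf r (nf r s) = nf r s.
Definition N2 (nf : normfun) :=
  forall s0 t0 (s : tm (Arr s0 t0)) (t : tm s0), nf t0 (App (nf _ s) t) = nf t0 (App s t).
Definition N3 (nf : normfun) :=
  forall b (s : tm (Base b)), is_nameapp s -> nf _ s = nargs nf s.
Definition N4 (nf : normfun) :=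
  forall (F : frame) (I : asg F), interpretation I ->
  forall r (s : tm r) (v : car F r), evalR (nf r s) I v <-> evalR s I v.
Definition normalization (nf : normfun) := [/\ N1 nf, N2 nf, N3 nf & N4 nf].

Definition subst := forall x : name, option (tm (tyof x)).
Definition sempty : subst := fun _ => None.
Definition supd (th : subst) (x : name) (t : tm (tyof x)) : subst :=
  fun y => match name_eq_dec x y with
           | left e => Some (eq_rect x (fun z => tm (tyof z)) t y e)
           | right _ => th y
           end.
Definition substfun := subst -> forall r, tm r -> tm r.

Definition S1 (hat : substfun) :=
  forall th x, hat th _ (Var x) = match th x with Some t => t | None => Var x end.
Definition S2 (hat : substfun) :=
  forall th s0 t0 (s : tm (Arr s0 t0)) (t : tm s0),
    hat th t0 (App s t) = App (hat th _ s) (hat th _ t).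
Definition S3 (nf : normfun) (hat : substfun) :=
  forall th x t0 (s : tm t0) (t : tm (tyof x)),
    nf t0 (App (hat th _ (Lam x s)) t) = nf t0 (hat (@supd th x t) t0 s).
Definition S4 (nf : normfun) (hat : substfun) :=
  forall r (s : tm r), nf r (hat sempty r s) = nf r s.
Definition substitution (nf : normfun) (hat : substfun) :=
  [/\ S1 hat, S2 hat, S3 nf hat & S4 nf hat].

Record valsys := VS {
  vty : B -> Type;
  vrel : forall b, tm (Base b) -> vty b -> Prop }.

Definition is_valsys (nf : normfun) (V : valsys) :=
  forall b (s : tm (Base b)) (a : vty V b), @vrel V b s a <-> @vrel V b (nf _ s) a.

Definition functional (V : valsys) :=
  forall b (s : tm (Base b)) (a a' : vty V b), @vrel V b s a -> @vrel V b s a' -> a = a'.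

(* Extension to all types: raw carrier and relation; D r := Ran(|>_r);
   |>_{s t} := {(s,f) : f : D s -> D t, forall (t,a) in |>_s, (s t, f a) in |>_t}. *)
Fixpoint vsR (V : valsys) (r : ty) : {T : Type & tm r -> T -> Prop} :=
  match r return {T : Type & tm r -> T -> Prop} with
  | Base b => existT (fun T => tm (Base b) -> T -> Prop) (vty V b) (@vrel V b)
  | Arr s0 t0 =>
      let Rs := vsR V s0 in
      let Rt := vsR V t0 in
      existT (fun T => tm (Arr s0 t0) -> T -> Prop)
        ({a : projT1 Rs | exists s, projT2 Rs s a} ->
         {a : projT1 Rt | exists s, projT2 Rt s a})
        (fun s f => forall (t : tm s0) (a : {a : projT1 Rs | exists s, projT2 Rs s a}),
            projT2 Rs t (proj1_sig a) -> projT2 Rt (App s t) (proj1_sig (f a)))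
  end.

Definition VD (V : valsys) (r : ty) :=
  {a : projT1 (vsR V r) | exists s, projT2 (vsR V r) s a}.

Definition vsrel (V : valsys) (r : ty) (s : tm r) (a : VD V r) : Prop :=
  projT2 (vsR V r) s (proj1_sig a).

Definition vs_frame (V : valsys) : frame :=
  @Frame (VD V) (fun s0 t0 (f : VD V (Arr s0 t0)) (a : VD V s0) => proj1_sig f a).

Definition admissible (V : valsys) (I : asg (vs_frame V)) : Prop :=
  forall x : name, vsrel (Var x) (I x).

End Lambda.

(* The proof is Tait's logical-relations argument.  One proves, by induction
   on [s], that for every substitution [th] whose entries are related to the
   values of an assignment [J], the term [s] evaluates under [J] to some [v]
   with [hat th s |> v].  In the abstraction case the value of [Lam x s] is the
   function [a |-> value of s under J^x_a]; it lies in D(σ τ) because, by S3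
   and the invariance of [|>] under normalization, applying [hat th (Lam x s)]
   to [t |> a] behaves like [hat th^x_t s].  Taking the empty substitution and
   using S4 gives [s |> Î s].  If the base relations are functional, so are all
   relations [|>_r], so [s |> a] forces [a = Î s]. *)
From mathcomp Require Import ssreflect ssrfun ssrbool eqtype choice.
From Stdlib Require Import FunctionalExtensionality ProofIrrelevance ClassicalEpsilon.

Set Implicit Arguments.
Unset Strict Implicit.

Section ValueSystem.
Variable B : countType.
Variable V : valsys B.

Lemma VD_arr_ext s0 t0 (f g : VD V (Arr s0 t0)) :
  (forall a, proj1_sig f a = proj1_sig g a) -> f = g.
Proof.
move: f g => [f pf] [g pg] /= fg.
have f_eq_g : f = g by apply: functional_extensionality.
by subst g; rewrite (proof_irrelevance _ pf pg).
Qed.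

Lemma is_frame_vs_frame (J : asg (vs_frame V)) : is_frame (vs_frame V).
Proof.
split=> [r | s t f g]; first by constructor; exact: J (r, 0).
exact: VD_arr_ext.
Qed.

Lemma evalR_vs_frame_det r (s : tm r) (J : asg (vs_frame V)) v v' :
  evalR s J v -> evalR s J v' -> v = v'.
Proof.
elim: s J v v' => [x | s0 t0 s IHs t IHt | x t0 s IHs] J v v' /=.
- by move=> -> ->.
- move=> [f [a [Hf [Ha ->]]]] [f' [a' [Hf' [Ha' ->]]]].
  by rewrite (IHs _ _ _ Hf Hf') (IHt _ _ _ Ha Ha').
- move=> H H'; apply: VD_arr_ext => a; exact: IHs (H a) (H' a).
Qed.

Lemma vsrel_functional : functional V ->
  forall r (s : tm r) (a a' : VD V r), vsrel s a -> vsrel s a' -> a = a'.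
Proof.
move=> hF r; elim: r => [b | s0 _ t0 IHt] s a a' Ha Ha'.
- move: a a' Ha Ha' => [a pa] [a' pa'] /= Ha Ha'.
  have E : a = a' := hF _ _ _ _ Ha Ha'; destruct E.
  by rewrite (proof_irrelevance _ pa pa').
- apply: VD_arr_ext => c; have [t Ht] := proj2_sig c.
  exact: IHt _ _ _ (Ha t c Ht) (Ha' t c Ht).
Qed.

Variable nf : normfun B.
Hypothesis hN2 : N2 nf.
Hypothesis hV : is_valsys nf V.

(* Stated on the raw relations, since the induction hypothesis at [Arr] is
   needed for values that are not yet known to lie in [VD]. *)
Lemma vsR_norm r (s : tm r) (a : projT1 (vsR V r)) :
  projT2 (vsR V r) s a <-> projT2 (vsR V r) (nf s) a.
Proof.
elim: r s a => [b | s0 _ t0 IHt] s a /=; first exact: hV.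
split=> H t c Hc; apply/IHt.
- by rewrite hN2; apply/(proj1 (IHt _ _)); exact: H.
- by rewrite -hN2; apply/(proj1 (IHt _ _)); exact: H.
Qed.

Lemma vsrel_norm r (s : tm r) (a : VD V r) : vsrel s a <-> vsrel (nf s) a.
Proof. exact: vsR_norm. Qed.

Definition subst_admissible (th : subst B) (J : asg (vs_frame V)) : Prop :=
  forall y, vsrel (match th y with Some t => t | None => Var y end) (J y).

Lemma subst_admissible_upd th J x (t : tm (tyof x)) (a : VD V (tyof x)) :
  subst_admissible th J -> vsrel t a -> subst_admissible (supd th t) (upd J a).
Proof.
move=> thJ ta y; rewrite /supd /upd.
by case: (name_eq_dec x y) => [e | _]; [destruct e | exact: thJ].
Qed.

Variable hat : substfun B.
Hypotheses (hS1 : S1 hat) (hS2 : S2 hat) (hS3 : S3 nf hat).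

Lemma evalR_subst_vsrel r (s : tm r) th J : subst_admissible th J ->
  exists v, evalR s J v /\ vsrel (hat th s) v.
Proof.
elim: s th J => [x | s0 t0 s IHs t IHt | x t0 s IHs] th J thJ.
- by exists (J x); split=> //; rewrite hS1; exact: thJ.
- have [f [Hf Rf]] := IHs th J thJ.
  have [a [Ha Ra]] := IHt th J thJ.
  exists (proj1_sig f a); split; first by exists f, a.
  by rewrite hS2; exact: Rf.
- have IHa (t : tm (tyof x)) a (ta : vsrel t a) := IHs _ _ (subst_admissible_upd thJ ta).
  have defined (a : VD V (tyof x)) : exists v, evalR s (upd J a) v.
    have [t ta] := proj2_sig a.
    by have [v [Hv _]] := IHa t a ta; exists v.
  pose g (a : VD V (tyof x)) := proj1_sig (constructive_indefinite_description _ (defined a)).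
  have Hg (a : VD V (tyof x)) : evalR s (upd J a) (g a).
    exact: proj2_sig (constructive_indefinite_description _ _).
  have Rg (t : tm (tyof x)) (a : VD V (tyof x)) : vsrel t a -> vsrel (App (hat th (Lam x s)) t) (g a).
    move=> ta; apply/vsrel_norm; rewrite hS3.
    have [v [Hv /vsrel_norm Rv]] := IHa t a ta.
    by rewrite (evalR_vs_frame_det (Hg a) Hv).
  pose f : VD V (Arr (tyof x) t0) := exist _ g (ex_intro _ _ Rg).
  by exists f; split; [exact: Hg | exact: Rg].
Qed.

Hypothesis hS4 : S4 nf hat.

Lemma vsrel_hat_empty r (s : tm r) (a : VD V r) :
  vsrel (hat (@sempty B) s) a -> vsrel s a.
Proof. by move=> /vsrel_norm hs; apply/vsrel_norm; rewrite -hS4. Qed.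

End ValueSystem.

Theorem theorem3p4 (B : countType) (nf : normfun B) (hat : substfun B)
  (hN : normalization nf) (hS : substitution nf hat)
  (V : valsys B) (hV : is_valsys nf V)
  (I : asg (vs_frame V)) (hI : admissible I) :
  interpretation I /\
  (forall (r : ty B) (s : tm r) (v : VD V r), evalR s I v -> vsrel s v) /\
  (functional V -> surjective I).
Proof.
case: hN => _ hN2 _ _; case: hS => hS1 hS2 hS3 hS4.
have Iadm : subst_admissible (@sempty B) I by [].
have evalI r (s : tm r) := evalR_subst_vsrel hN2 hV hS1 hS2 hS3 s Iadm.
have rel_eval r (s : tm r) v : evalR s I v -> vsrel s v.
  move=> sv; have [v' [sv' Rv']] := evalI r s.
  by rewrite (evalR_vs_frame_det sv sv'); exact: vsrel_hat_empty Rv'.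
split; [split | split] => //.
- exact: is_frame_vs_frame.
- by move=> r s; have [v [sv _]] := evalI r s; exists v.
- move=> hF r a; have [s sa] := proj2_sig a.
  have [v [sv _]] := evalI r s.
  by exists s; rewrite -(vsrel_functional hF (rel_eval _ _ _ sv) sa).
Qed.
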